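(* Let $w=(w_\sigma)_{\sigma\in\mathscr{I}}$ index an Ekedahl–Oort stratum $M_w$, let $x\in M_w(k)$ be a geometric point, and let $\{\tau,\bar\tau\}\in\mathscr{I}^+$ with $\tau=i\in\mathscr{I}_\mathfrak{P}$, writing $\mathfrak{f}(i)=r_\tau$ and $\mathfrak{f}(i-1)=r_{\phi^{-1}\circ\tau}$. Then $r_V\{\tau,\bar\tau\}(x)=r_V^{\rm ord}\{\tau,\bar\tau\}$ if and only if: (a) in case $\mathfrak{f}(i-1)\le\mathfrak{f}(i)$: $\#\{j:\ j\le d-\mathfrak{f}(i-1),\ w_i(j)\le\mathfrak{f}(i)\}=\mathfrak{f}(i)-\mathfrak{f}(i-1)$; (b) in case $\mathfrak{f}(i)\le\mathfrak{f}(i-1)$: $\#\{j:\ d-\mathfrak{f}(i-1)+1\le j,\ \mathfrak{f}(i)+1\le w_i(j)\}=\mathfrak{f}(i-1)-\mathfrak{f}(i)$. (When $\mathfrak{f}(i-1)=\mathfrak{f}(i)$ both conditions are equivalent.)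
   Context: Notation for unitary Shimura varieties: $K$ CM of degree $2g$, $\mathscr{I}=\mathrm{Hom}(\mathcal{O}_K,\kappa)$ (via a fixed embedding), $\bar\tau=\tau\circ\rho$, $\mathscr{I}^+$ the pairs $\{\tau,\bar\tau\}$, signature $(r_\tau)$ with $r_\tau+r_{\bar\tau}=d$. For a prime $\mathfrak{P}\mid p$ of $K$, $\mathscr{I}_\mathfrak{P}$ are the embeddings factoring through $\mathcal{O}_K/\mathfrak{P}$; Frobenius permutes $\mathscr{I}_\mathfrak{P}$ cyclically, and when $\tau$ is written $i$, $\phi\circ\tau$ is written $i+1$ and $\phi^{-1}\circ\tau$ is written $i-1$; $\mathfrak{f}(i)=r_i$. $M$ is the special fiber over $\kappa$ of the PEL unitary moduli space; $\mathcal{P}_\tau=\underline\omega[\tau]$, $V:\mathcal{P}_\tau\to\Phi^*_M\mathcal{P}_{\phi^{-1}\circ\tau}$ induced by Verschiebung; $r_V\{\tau,\bar\tau\}(x)=\dim\ker(V\otimes V)$ on $(\mathcal{P}_\tau\otimes\mathcal{P}_{\bar\tau})_x$, and $r_V^{\rm ord}\{\tau,\bar\tau\}=\max\{0,r_\tau-r_{\phi^{-1}\circ\tau}\}(d-r_\tau)+r_\tau\max\{0,r_{\phi^{-1}\circ\tau}-r_\tau\}$. An $(e,d-e)$-shuffle is a permutation $\pi$ of $\{1,\dots,d\}$ with $\pi^{-1}(1)<\dots<\pi^{-1}(e)$ and $\pi^{-1}(e+1)<\dots<\pi^{-1}(d)$; $\Pi_{e,d-e}$ is the set of these; $w_0(\nu)=d+1-\nu$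 and $\check\pi=w_0\pi w_0$. By Moonen, EO strata $M_w$ of $M$ correspond bijectively to tuples $w=(w_\sigma)_{\sigma\in\mathscr{I}}$ with $w_\sigma\in\Pi_{r_\sigma,d-r_\sigma}$ and $w_{\bar\sigma}=\check w_\sigma$, such that for geometric $x\in M_w(k)$ the Dieudonné module of $A_x[p]$ is isomorphic (with $\mathcal{O}_K$-action) to $N_w=\bigoplus_{i\in\mathscr{I}}\bigoplus_{j=1}^dke_{i,j}$ ($\mathcal{O}_K$ acting on the $i$-summand via $i$) with $F(e_{i,j})=0$ if $w_i(j)\le\mathfrak{f}(i)$, $F(e_{i,j})=e_{i+1,m}$ if $w_i(j)=\mathfrak{f}(i)+m$; $V(e_{i+1,j})=0$ if $j\le d-\mathfrak{f}(i)$, $V(e_{i+1,j})=e_{i,n}$ if $j=d-\mathfrak{f}(i)+w_i(n)$ ($F$ $\phi$-semilinear, $V$ $\phi^{-1}$-semilinear); and $\dim M_w=\sum_{\{\sigma,\bar\sigma\}\in\mathscr{I}^+}\ell(w_\sigma)$, $\ell$ the length in $\mathfrak{S}_d$. The fiber $\mathcal{P}_{\tau,x}$ is identified with the $\tau$-part of $N_w[F]$. *)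

From HB Require Import structures.
From mathcomp Require Import all_boot all_order all_algebra all_fingroup.
From mathcomp Require Export mxtens.
Set Implicit Arguments. Unset Strict Implicit. Unset Printing Implicit Defensive.
Import GRing.Theory.
Local Open Scope ring_scope.

(* Embeddings I = Hom(O_K, kappa) form a finite type; phi is the Frobenius
   (a permutation of I whose orbits are the I_P), rho the complex conjugation
   (fixed-point-free involution commuting with phi).  Indices j in 'I_d are
   0-indexed: j : 'I_d stands for j+1 in {1..d}; similarly for values of w. *)

(* (e, d-e)-shuffle: pi^{-1}(1) < ... < pi^{-1}(e) and
   pi^{-1}(e+1) < ... < pi^{-1}(d). *)
Definition is_shuffle (d e : nat) (pi : 'S_d) : Prop :=
  forall a b : 'I_d, (a < b)%N ->
    ((b < e)%N || (e <= a)%N) -> ((pi^-1)%g a < (pi^-1)%g b)%N.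

(* The standard Dieudonne module N_w = (+)_{i, j} k e_{i,j}.  Matrices act on
   row vectors of coordinates in the basis (e_{s,j})_j of the s-summand.       *)

(* F restricted to the s-summand, valued in the (phi s)-summand:
   F(e_{s,j}) = e_{phi s, m} if w_s(j) = r_s + m, and 0 if w_s(j) <= r_s. *)
Definition Fmat (K : fieldType) (I : finType) (d : nat) (r : I -> nat)
    (w : I -> 'S_d) (s : I) : 'M[K]_d :=
  \matrix_(j, m) (((w s j : nat) == r s + m)%N)%:R.

(* V restricted to the t-summand, valued in the (phi^-1 t)-summand; with
   s = phi^-1 t (so t = s+1):  V(e_{s+1,j}) = 0 if j <= d - r_s, and
   V(e_{s+1,j}) = e_{s,n} if j = d - r_s + w_s(n). *)
Definition Vmat (K : fieldType) (I : finType) (phi : {perm I}) (d : nat)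
    (r : I -> nat) (w : I -> 'S_d) (t : I) : 'M[K]_d :=
  let s := (phi^-1)%g t in
  \matrix_(j, n) (((j : nat) == d - r s + w s n)%N)%:R.

Definition Pfib (K : fieldType) (I : finType) (d : nat) (r : I -> nat)
    (w : I -> 'S_d) (s : I) : 'M[K]_d :=
  kermx (Fmat K r w s).

Definition rV (K : fieldType) (I : finType) (phi : {perm I}) (rho : I -> I)
    (d : nat) (r : I -> nat) (w : I -> 'S_d) (tau : I) : nat :=
  \rank ((Pfib K r w tau *t Pfib K r w (rho tau))
          :&: kermx (Vmat K phi r w tau *t Vmat K phi r w (rho tau)))%MS.

(* r_V^ord{tau,taubar}; nat subtraction is truncated, i.e. max{0, _}. *)
Definition rVord (I : finType) (phi : {perm I}) (d : nat) (r : I -> nat)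
    (tau : I) : nat :=
  ((r tau - r ((phi^-1)%g tau)) * (d - r tau)
   + r tau * (r ((phi^-1)%g tau) - r tau))%N.

From HB Require Import structures.
From mathcomp Require Import all_boot all_order all_algebra all_fingroup.
From mathcomp Require Import mxtens zify.
Set Implicit Arguments. Unset Strict Implicit. Unset Printing Implicit Defensive.
Import GRing.Theory.
Local Open Scope ring_scope.

(* In the standard basis of [N_w], F and V are partial permutation matrices,
   so [P_tau (x) P_taubar] and [ker (V (x) V)] are coordinate subspaces and
   [r_V] counts the pairs [(e_(tau,j), e_(taubar,k))] killed by F with [V e = 0]
   on at least one side.  Since [w_taubar] is [w_tau] conjugated by [w_0], this
   count is [n1 (d - r_tau) + n2 n4], where [n1 + n2 = r_tau], [n2 + n4 = r_(tau-1)]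
   and [n1], [n4] are the two cardinalities of the statement.  Against
   [r_V^ord] the count has excess zero exactly when [n1 = 0] or [n4 = 0],
   which is conditions (a) and (b). *)

Section CoordinateSubspaces.
Variable F : fieldType.

Definition coord_mx n (P : pred 'I_n) : 'M[F]_n := diag_mx (\row_i (P i)%:R).

Lemma coord_mxE n (P : pred 'I_n) i j : coord_mx P i j = (P i && (i == j))%:R.
Proof. by rewrite !mxE; case: (P i); case: (i == j). Qed.

Lemma coord_mx_mul n (P Q : pred 'I_n) :
  coord_mx P *m coord_mx Q = coord_mx (predI P Q).
Proof.
apply/matrixP=> i j; rewrite mul_mx_diag !mxE /=.
by case: eqP => [->|_]; case: (P j); case: (Q j); rewrite ?mulr1 ?mulr0.
Qed.

Lemma submx_coord_mx m n (P : pred 'I_n) (A : 'M[F]_(m, n)) :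
  (A <= coord_mx P)%MS = (A *m coord_mx P == A).
Proof.
apply/idP/eqP=> [/submxP[X ->]|<-]; last exact: submxMl.
rewrite -mulmxA coord_mx_mul; congr (_ *m _).
by apply/matrixP=> i j; rewrite !coord_mxE /= andbb.
Qed.

Lemma kermx_coord_mx n (P : pred 'I_n) : (kermx (coord_mx P) :=: coord_mx (predC P))%MS.
Proof.
apply/eqmxP/andP; split; last first.
  by rewrite sub_kermx coord_mx_mul; apply/eqP/matrixP=> i j; rewrite coord_mxE !mxE /= andNb.
rewrite submx_coord_mx (_ : coord_mx (predC P) = 1%:M - coord_mx P).
  by rewrite mulmxBr mulmx1 mulmx_ker subr0.
apply/matrixP=> i j; rewrite !mxE /=.
by case: eqP => [->|_]; case: (P j); rewrite ?subr0 ?subrr.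
Qed.

Lemma capmx_coord_mx n (P Q : pred 'I_n) :
  (coord_mx P :&: coord_mx Q :=: coord_mx (predI P Q))%MS.
Proof.
apply/eqmxP/andP; split.
  rewrite submx_coord_mx -coord_mx_mul mulmxA.
  have /eqP-> : (coord_mx P :&: coord_mx Q)%MS *m coord_mx P == (coord_mx P :&: coord_mx Q)%MS.
    by rewrite -submx_coord_mx capmxSl.
  by rewrite -submx_coord_mx capmxSr.
rewrite sub_capmx !submx_coord_mx !coord_mx_mul.
by apply/andP; split; apply/eqP/matrixP=> i j; rewrite !coord_mxE /=; case: (P i); case: (Q i).
Qed.

Lemma tensmx_coord_mx n p (P : pred 'I_n) (Q : pred 'I_p) :
  coord_mx P *t coord_mx Q
  = coord_mx (fun k => P (mxtens_unindex k).1 && Q (mxtens_unindex k).2).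
Proof.
apply/matrixP=> i j; case: (mxtens_indexP i) => i1 i2; case: (mxtens_indexP j) => j1 j2.
rewrite tensmxE !coord_mxE mxtens_indexK (can_eq (@mxtens_indexK n p)) xpair_eqE /=.
by case: (P i1); case: (Q i2); case: (i1 == j1); case: (i2 == j2); rewrite ?mulr1 ?mulr0.
Qed.

Lemma mxrank_coord_mx n (P : pred 'I_n) : \rank (coord_mx P) = #|P|.
Proof.
have row_coord i : row i (coord_mx P) = if P i then delta_mx 0 i else 0.
  apply/matrixP=> a j; rewrite mxE coord_mxE (ord1 a).
  by case: (P i); rewrite ?mxE ?eqxx // eq_sym.
have -> : (coord_mx P :=: \sum_(i | P i) <<delta_mx 0 i : 'rV[F]_n>>)%MS.
  apply/eqmxP/andP; split.
    apply/row_subP=> i; rewrite row_coord; case: ifP => Pi; last exact: sub0mx.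
    by apply: (sumsmx_sup i) => //; rewrite genmxE.
  by apply/sumsmx_subP=> i Pi; rewrite genmxE submx_coord_mx -rowE row_coord Pi.
rewrite (mxdirectP (mxdirect_delta _ (fun _ _ _ _ => id))) /= -sum1_card.
by apply: eq_bigr => i _; rewrite mxrank_gen mxrank_delta.
Qed.

End CoordinateSubspaces.

Section KernelsAndTensors.
Variable F : fieldType.

Lemma kermx_factor m n (M : 'M[F]_(m, n)) (D : 'M[F]_m) (W : 'M[F]_(n, m)) :
  M = D *m M -> M *m W = D -> (kermx M :=: kermx D)%MS.
Proof.
move=> DM MW; apply/eqmxP/andP; split; rewrite sub_kermx.
  by rewrite -MW mulmxA mulmx_ker mul0mx.
by rewrite DM mulmxA mulmx_ker mul0mx.
Qed.

Lemma tensmx_eqmx m1 m1' n m2 m2' p (A : 'M[F]_(m1, n)) (A' : 'M[F]_(m1', n))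
    (B : 'M[F]_(m2, p)) (B' : 'M[F]_(m2', p)) :
  (A :=: A')%MS -> (B :=: B')%MS -> (A *t B :=: A' *t B')%MS.
Proof.
have tensmxS m3 m3' m4 m4' (X : 'M[F]_(m3, n)) (X' : 'M[F]_(m3', n))
    (Y : 'M[F]_(m4, p)) (Y' : 'M[F]_(m4', p)) :
    (X <= X')%MS -> (Y <= Y')%MS -> (X *t Y <= X' *t Y')%MS.
  by case/submxP=> U ->; case/submxP=> V ->; rewrite -tensmx_mul submxMl.
by move=> eqA eqB; apply/eqmxP/andP; split; apply: tensmxS; rewrite ?eqA ?eqB.
Qed.

End KernelsAndTensors.

Section PartialPermutationMatrices.
Variables (F : fieldType) (n : nat).

Definition partial_inj (R : 'I_n -> 'I_n -> bool) :=
  forall j j' m m', R j m -> R j' m' -> (j == j') = (m == m').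

Definition pperm_mx (R : 'I_n -> 'I_n -> bool) : 'M[F]_n := \matrix_(j, m) (R j m)%:R.

Definition pperm_rows (R : 'I_n -> 'I_n -> bool) : pred 'I_n := fun j => [exists m, R j m].

Variables (R : 'I_n -> 'I_n -> bool).
Hypothesis R_inj : partial_inj R.

Lemma coord_rows_pperm_mx : coord_mx F (pperm_rows R) *m pperm_mx R = pperm_mx R.
Proof.
apply/matrixP=> j m; rewrite mul_diag_mx !mxE.
by case Rjm: (R j m); rewrite ?mulr0 // (_ : pperm_rows R j) ?mulr1 //; apply/existsP; exists m.
Qed.

Lemma pperm_mx_mulT : pperm_mx R *m (pperm_mx R)^T = coord_mx F (pperm_rows R).
Proof.
apply/matrixP=> j j'; rewrite coord_mxE !mxE.
case: (boolP (pperm_rows R j)) => [/existsP[m0 Rjm0]|/existsP nRj] /=.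
  rewrite (bigD1 m0) //= big1 ?addr0 => [|m ne_m_m0]; rewrite !mxE.
    rewrite Rjm0 mul1r; case Rj'm0: (R j' m0); first by rewrite (R_inj Rjm0 Rj'm0) eqxx.
    by case: eqP => // ej; rewrite -ej Rjm0 in Rj'm0.
  case Rjm: (R j m); rewrite ?mul0r //.
  by move: (R_inj Rjm0 Rjm); rewrite eqxx eq_sym (negPf ne_m_m0).
rewrite big1 // => m _; rewrite !mxE.
by case Rjm: (R j m); rewrite ?mul0r //; case: nRj; exists m.
Qed.

Lemma kermx_pperm_mx : (kermx (pperm_mx R) :=: coord_mx F (predC (pperm_rows R)))%MS.
Proof.
apply: eqmx_trans (kermx_coord_mx _ _).
exact: kermx_factor (esym coord_rows_pperm_mx) pperm_mx_mulT.
Qed.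

End PartialPermutationMatrices.

Lemma kermx_tensmx_pperm_mx (F : fieldType) n p
    (R1 : 'I_n -> 'I_n -> bool) (R2 : 'I_p -> 'I_p -> bool) :
  partial_inj R1 -> partial_inj R2 ->
  (kermx (pperm_mx F R1 *t pperm_mx F R2) :=:
     coord_mx F (predC (fun k => pperm_rows R1 (mxtens_unindex k).1
                                 && pperm_rows R2 (mxtens_unindex k).2)))%MS.
Proof.
move=> inj1 inj2; apply: eqmx_trans (kermx_coord_mx _ _).
rewrite -tensmx_coord_mx; apply: (kermx_factor (W := (pperm_mx F R1)^T *t (pperm_mx F R2)^T)).
  by rewrite tensmx_mul !coord_rows_pperm_mx.
by rewrite tensmx_mul !pperm_mx_mulT.
Qed.

Lemma card_mxtens_unindex n p (Q : pred ('I_n * 'I_p)) :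
  #|[pred k | Q (mxtens_unindex k)]| = #|[set x | Q x]|.
Proof.
rewrite -(on_card_preimset (f := @mxtens_unindex n p)); last first.
  by apply: onW_bij; exists (@mxtens_index n p); [apply: mxtens_unindexK|apply: mxtens_indexK].
by apply: eq_card => k; rewrite !inE.
Qed.

Lemma mxrank_ker_tens_pperm (F : fieldType) n p (R1 S1 : 'I_n -> 'I_n -> bool)
    (R2 S2 : 'I_p -> 'I_p -> bool) :
  partial_inj R1 -> partial_inj R2 -> partial_inj S1 -> partial_inj S2 ->
  \rank ((kermx (pperm_mx F R1) *t kermx (pperm_mx F R2))
           :&: kermx (pperm_mx F S1 *t pperm_mx F S2))%MS
  = #|[set x : 'I_n * 'I_p | [&& ~~ pperm_rows R1 x.1, ~~ pperm_rows R2 x.2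
                               & ~~ pperm_rows S1 x.1 || ~~ pperm_rows S2 x.2]]|.
Proof.
move=> injR1 injR2 injS1 injS2.
rewrite (cap_eqmx (tensmx_eqmx (kermx_pperm_mx F injR1) (kermx_pperm_mx F injR2))
                  (kermx_tensmx_pperm_mx F injS1 injS2)).
rewrite tensmx_coord_mx capmx_coord_mx mxrank_coord_mx -card_mxtens_unindex.
by apply: eq_card => k; rewrite !inE /= negb_and andbA.
Qed.

Local Close Scope ring_scope.

Section ShiftedPermutationRelations.
Variables (n : nat) (f : 'S_n) (c : nat).

Lemma exists_shift (x : nat) : x < n -> [exists m : 'I_n, x == c + m] = (c <= x).
Proof.
move=> lt_xn; apply/existsP/idP => [[m /eqP->]|le_cx]; first exact: leq_addr.
have lt_n : x - c < n by lia.
by exists (Ordinal lt_n); apply/eqP => /=; lia.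
Qed.

Lemma partial_inj_shift_perm : partial_inj (fun j m : 'I_n => (f j : nat) == c + m).
Proof.
move=> j j' m m' /eqP fj /eqP fj'; apply/eqP/eqP => [ejj'|emm'].
  by subst j'; apply: ord_inj; lia.
by subst m'; apply: (@perm_inj _ f); apply: ord_inj; lia.
Qed.

Lemma partial_inj_shift_permV : partial_inj (fun j m : 'I_n => (j : nat) == c + f m).
Proof.
move=> j j' m m' /eqP fm /eqP fm'; apply/eqP/eqP => [ejj'|emm'].
  by subst j'; apply: (@perm_inj _ f); apply: ord_inj; lia.
by subst m'; apply: ord_inj; lia.
Qed.

Lemma pperm_rows_shift_perm (j : 'I_n) :
  pperm_rows (fun j m : 'I_n => (f j : nat) == c + m) j = (c <= f j).
Proof. exact: exists_shift. Qed.

Lemma pperm_rows_shift_permV (j : 'I_n) :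
  pperm_rows (fun j m : 'I_n => (j : nat) == c + f m) j = (c <= j).
Proof.
rewrite -exists_shift //; apply/existsP/existsP => [[m jm]|[v jv]]; first by exists (f m).
by exists ((f^-1)%g v); rewrite permKV.
Qed.

End ShiftedPermutationRelations.

Lemma rV_card_pairs (K : fieldType) (I : finType) (phi : {perm I}) (rho : I -> I)
    (d : nat) (r : I -> nat) (w : I -> 'S_d) (tau : I) :
  rV K phi rho r w tau =
  #|[set x : 'I_d * 'I_d |
      [&& w tau x.1 < r tau, w (rho tau) x.2 < r (rho tau)
        & (x.1 < d - r ((phi^-1)%g tau)) || (x.2 < d - r ((phi^-1)%g (rho tau)))]]|.
Proof.
rewrite /rV /Pfib mxrank_ker_tens_pperm;
  [|exact: partial_inj_shift_perm|exact: partial_inj_shift_perm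
   |exact: partial_inj_shift_permV|exact: partial_inj_shift_permV].
by apply: eq_card => x; rewrite !inE !pperm_rows_shift_perm !pperm_rows_shift_permV -!ltnNge.
Qed.

Lemma card_pairs_orb (T1 T2 : finType) (A C : pred T1) (B D : pred T2) :
  #|[set x : T1 * T2 | [&& A x.1, B x.2 & C x.1 || D x.2]]|
  = #|[set i | A i && C i]| * #|[set j | B j]|
    + #|[set i | A i && ~~ C i]| * #|[set j | B j && D j]|.
Proof.
rewrite -!cardsX -cardsUI.
have -> : [set x : T1 * T2 | [&& A x.1, B x.2 & C x.1 || D x.2]]
          = setX [set i | A i && C i] [set j | B j]
            :|: setX [set i | A i && ~~ C i] [set j | B j && D j].
  by apply/setP=> -[i j]; rewrite !inE /=; case: (A i); case: (C i); case: (B j).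
suff -> : setX [set i | A i && C i] [set j | B j]
          :&: setX [set i | A i && ~~ C i] [set j | B j && D j] = set0 by rewrite cards0 addn0.
by apply/setP=> -[i j]; rewrite !inE /=; case: (C i); rewrite !andbF.
Qed.

Lemma cards_predID (T : finType) (P Q : pred T) :
  #|[set x | P x && Q x]| + #|[set x | P x && ~~ Q x]| = #|[set x | P x]|.
Proof.
rewrite -[RHS](cardsID [set x | Q x]).
by congr (_ + _); apply: eq_card => x; rewrite !inE andbC.
Qed.

Lemma card_ord_lt n m : m <= n -> #|[set j : 'I_n | j < m]| = m.
Proof.
move=> le_mn; have widen_inj : injective (widen_ord le_mn) by move=> i i' /(congr1 val) /= /val_inj.
rewrite -[RHS]card_ord -(card_imset _ widen_inj).
apply: eq_card => j; rewrite inE; apply/idP/imsetP => [lt_jm|[i _ ->]]; last exact: (ltn_ord i).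
by exists (Ordinal lt_jm) => //; apply: val_inj.
Qed.

Lemma card_ord_geq n m : m <= n -> #|[set j : 'I_n | m <= j]| = n - m.
Proof.
move=> le_mn; have := cardsC [set j : 'I_n | j < m]; rewrite card_ord card_ord_lt //.
rewrite (_ : ~: _ = [set j : 'I_n | m <= j]); first lia.
by apply/setP => j; rewrite !inE -leqNgt.
Qed.

Lemma card_perm_lt n (f : 'S_n) m : m <= n -> #|[set j | f j < m]| = m.
Proof.
move=> le_mn; rewrite -[RHS](card_ord_lt le_mn) -[RHS](card_preimset _ (@perm_inj _ f)).
by apply: eq_card => j; rewrite !inE.
Qed.

(* The left side exceeds the right one by [n4 * (e + n2)] if [n4 <= n1], and by
   [n1 * (n1 + n2 + e - n4)] otherwise. *)
Lemma ordinary_count_iff (n1 n2 n4 e : nat) : n4 <= e ->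
  n1 * e + n2 * n4 = (n1 + n2 - (n2 + n4)) * e + (n1 + n2) * (n2 + n4 - (n1 + n2))
  <-> n1 = 0 \/ n4 = 0.
Proof.
move=> le_n4e; have [le41|lt14] := leqP n4 n1.
- have [k ->] : exists k, n1 = n4 + k by exists (n1 - n4); lia.
  rewrite (_ : n4 + k + n2 - (n2 + n4) = k) 1?(_ : n2 + n4 - (n4 + k + n2) = 0); try lia.
  have -> : (n4 + k) * e + n2 * n4 = k * e + n4 * (e + n2) by nia.
  rewrite muln0 addn0; split=> [E|]; last by case=> ?; rewrite (_ : n4 = 0) ?mul0n ?addn0 //; lia.
  have /eqP : n4 * (e + n2) = 0 by lia.
  by rewrite muln_eq0 => /orP[] /eqP; lia.
- have [k ek] : exists k, n4 = n1 + k.+1 by exists (n4 - n1).-1; lia.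
  subst n4; rewrite (_ : n1 + n2 - (n2 + (n1 + k.+1)) = 0); last by lia.
  rewrite (_ : n2 + (n1 + k.+1) - (n1 + n2) = k.+1); last by lia.
  split=> [E|]; last by case=> [->|]; [rewrite mul0n !add0n | lia].
  have [f ef] : exists f, e = n1 + k.+1 + f by exists (e - (n1 + k.+1)); lia.
  have /eqP : n1 * (n1 + f + n2) = 0 by subst e; move: E; rewrite !mulnDr !mulnDl; lia.
  by rewrite muln_eq0 => /orP[] /eqP; lia.
Qed.

Lemma pair_count_eq_ordinary_iff (n1 n2 n4 e a b : nat) :
  n1 + n2 = a -> n2 + n4 = b -> n4 <= e ->
  n1 * e + n2 * n4 = (a - b) * e + a * (b - a)
  <-> (b <= a -> n1 = a - b) /\ (a <= b -> n4 = b - a).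
Proof. by move=> <- <- /ordinary_count_iff ->; split; lia. Qed.

Section EOStratumCounts.
Variables (K : fieldType) (I : finType) (phi : {perm I}) (rho : I -> I).
Variables (d : nat) (r : I -> nat) (w : I -> 'S_d) (tau : I).
Hypothesis phi_rho : forall u, phi (rho u) = rho (phi u).
Hypothesis r_rho : forall u, r u + r (rho u) = d.
Hypothesis w_rho : forall u (j : 'I_d), w (rho u) j = rev_ord (w u (rev_ord j)).

(* With [s = phi^-1 tau]: [n1], [n2], [n4] count the basis vectors [e_(tau,j)]
   with [F e = 0, V e = 0], with [F e = 0, V e <> 0], and with [F e <> 0, V e <> 0]. *)
Let s := (phi^-1)%g tau.
Let n1 := #|[set j : 'I_d | (j < d - r s) && (w tau j < r tau)]|.
Let n2 := #|[set j : 'I_d | (w tau j < r tau) && ~~ (j < d - r s)]|.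
Let n4 := #|[set j : 'I_d | (d - r s <= j) && (r tau <= w tau j)]|.

Lemma r_le u : r u <= d.
Proof. by rewrite -(r_rho u) leq_addr. Qed.

Lemma r_rho_sub u : r (rho u) = d - r u.
Proof. by move: (r_rho u); lia. Qed.

Lemma permV_rho u : (phi^-1)%g (rho u) = rho ((phi^-1)%g u).
Proof. by apply: (@perm_inj _ phi); rewrite permKV phi_rho permKV. Qed.

(* [w (rho tau)] is [w tau] with indices and values reversed. *)
Lemma card_kerF_kerV_conj :
  #|[set j | (w (rho tau) j < r (rho tau)) && (j < d - r (rho s))]| = n4.
Proof.
rewrite -(card_preimset _ (@rev_ord_inj d)); apply: eq_card => j.
rewrite !inE w_rho rev_ordK !r_rho_sub /=.
have := ltn_ord j; have := ltn_ord (w tau j); have := r_le tau; have := r_le s.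
by move=> *; apply/andP/andP => -[? ?]; split; lia.
Qed.

Lemma rV_count : rV K phi rho r w tau = n1 * (d - r tau) + n2 * n4.
Proof.
rewrite rV_card_pairs permV_rho -/s.
rewrite (card_pairs_orb (fun j => w tau j < r tau) (fun j : 'I_d => j < d - r s)
           (fun j => w (rho tau) j < r (rho tau)) (fun j : 'I_d => j < d - r (rho s))) /=.
rewrite card_kerF_kerV_conj r_rho_sub card_perm_lt ?leq_subr //.
by congr (_ * _ + _); apply: eq_card => j; rewrite !inE andbC.
Qed.

Lemma card_kerF_tau : n1 + n2 = r tau.
Proof.
rewrite -(card_perm_lt (w tau) (r_le tau)).
rewrite -(cards_predID (fun j => w tau j < r tau) (fun j : 'I_d => j < d - r s)).
by congr (_ + _); apply: eq_card => j; rewrite !inE andbC.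
Qed.

Lemma card_V_nonzero_tau : n2 + n4 = r s.
Proof.
have -> : r s = d - (d - r s) by move: (r_le s); lia.
rewrite -card_ord_geq ?leq_subr //.
rewrite -(cards_predID (fun j : 'I_d => d - r s <= j) (fun j => w tau j < r tau)).
by congr (_ + _); apply: eq_card => j; rewrite !inE -?leqNgt andbC.
Qed.

Lemma card_F_V_nonzero_le : n4 <= d - r tau.
Proof.
have := card_perm_lt (w (rho tau)) (r_le (rho tau)); rewrite r_rho_sub => <-.
rewrite -card_kerF_kerV_conj subset_leq_card //.
by apply/subsetP => j; rewrite !inE r_rho_sub => /andP[].
Qed.

End EOStratumCounts.

Theorem mainTheorem13
  (p : nat) (K : closedFieldType) (I : finType)
  (phi : {perm I}) (rho : I -> I) (d : nat) (r : I -> nat) (w : I -> 'S_d)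
  (tau : I) :
  prime p -> (p \in [pchar K])%R ->
  (forall s, rho (rho s) = s) -> (forall s, rho s != s) ->
  (forall s, phi (rho s) = rho (phi s)) ->
  (forall s, (r s + r (rho s))%N = d) ->
  (forall s, is_shuffle (r s) (w s)) ->
  (forall s (j : 'I_d), w (rho s) j = rev_ord (w s (rev_ord j))) ->
  (rV K phi rho r w tau = rVord phi d r tau <->
   (((r ((phi^-1)%g tau) <= r tau)%N ->
       #|[set j : 'I_d | ((j < d - r ((phi^-1)%g tau))%N
                          && ((w tau j : nat) < r tau)%N)]|
       = (r tau - r ((phi^-1)%g tau))%N)
    /\
    ((r tau <= r ((phi^-1)%g tau))%N ->
       #|[set j : 'I_d | ((d - r ((phi^-1)%g tau) <= j)%N
                          && (r tau <= (w tau j : nat))%N)]|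
       = (r ((phi^-1)%g tau) - r tau)%N))).
Proof.
move=> _ _ _ _ phi_rho r_rho _ w_rho.
rewrite (rV_count K tau phi_rho r_rho w_rho) /rVord.
exact: pair_count_eq_ordinary_iff (card_kerF_tau phi w tau r_rho) (card_V_nonzero_tau phi w tau r_rho)
                                  (card_F_V_nonzero_le phi tau r_rho w_rho).
Qed.
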